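(* Let $\mathbb{F}$ be a field of characteristic zero, $d\ge 1$, $n\geq 2$, and let $\mathbf{b}=(b_1,\dots,b_n)\in\mathbb{N}_+^n$ with $b_1=1$ and $b_n>\dots>b_2\geq 2$. Let $\mathbf{c}_i=(c_{i,1},\dots,c_{i,n})\in\mathbb{F}^n$ for $i=1,\dots,d$, where $c_{1,1},\dots,c_{d,1}$ are not all zero. For $m=0,1,\dots,b_n$ let $$q_{n,m}=\sum_{\tau(\pmb\gamma_1,\dots,\pmb\gamma_d)=m}\frac{\mathbf{c}_1^{\pmb\gamma_1}\cdots\mathbf{c}_d^{\pmb\gamma_d}}{\pmb\gamma_1!\cdots\pmb\gamma_d!}x_1^{|\pmb\gamma_1|}\cdots x_d^{|\pmb\gamma_d|}\in\mathbb{F}[x_1,\dots,x_d],$$ and let $Q=\mathrm{span}\{q_{n,m}: m=0,1,\dots,b_n\}$ (a $D$-invariant subspace). Then the breadth of $Q$ is $1$.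
   Context: The sum runs over $\pmb\gamma_i=(\gamma_{i,1},\dots,\gamma_{i,n})\in\mathbb{N}^n$ ($i=1,\dots,d$), with $|\pmb\gamma_i|=\sum_j\gamma_{i,j}$, $\pmb\gamma_i!=\prod_j\gamma_{i,j}!$, $\mathbf{c}_i^{\pmb\gamma_i}=\prod_{j=1}^n c_{i,j}^{\gamma_{i,j}}$ (with the convention $0^0=1$), and $\tau(\pmb\gamma_1,\dots,\pmb\gamma_d)=\sum_{j=1}^n b_j\sum_{i=1}^d\gamma_{i,j}$. A polynomial subspace is $D$-invariant if it is closed under all partial derivatives $\partial/\partial x_j$. The breadth of a $D$-invariant polynomial subspace is the number of linear polynomials in a basis of it, maximized over bases; concretely it is the dimension of the space of degree-one homogeneous parts of the polynomials of total degree at most one in the subspace. *)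

From HB Require Import structures.
From mathcomp Require Import all_boot all_order all_algebra.
From mathcomp Require Import mpoly.
Set Implicit Arguments. Unset Strict Implicit. Unset Printing Implicit Defensive.
Import Order.TTheory GRing.Theory.
Local Open Scope ring_scope.

Section Defs.
Variables (F : fieldType) (d n : nat).

(* Indices are 0-based: variable i : 'I_d is x_{i+1}, coordinate j : 'I_n is j+1. *)

Definition tau (b : nat -> nat) (g : 'I_d -> 'I_n -> nat) : nat :=
  (\sum_(j < n) b j * \sum_(i < d) g i j)%N.

(* q_{n,m}: sum over all (gamma_1..gamma_d) in N^{d x n} with tau = m.  Each
   entry of such a gamma is at most m since all b_j >= 1, so we enumerate
   gamma with entries in 'I_(m.+1). *)
Definition qnm (b : nat -> nat) (c : 'I_d -> 'I_n -> F) (m : nat)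
  : {mpoly F[d]} :=
  \sum_(g : {ffun 'I_d -> {ffun 'I_n -> 'I_m.+1}}
          | tau b (fun i j => nat_of_ord (g i j)) == m)
    ((\prod_(i < d) \prod_(j < n)
        (c i j ^+ g i j / ((g i j)`!)%:R)) *:
     \prod_(i < d) 'X_i ^+ (\sum_(j < n) (g i j : nat))%N).

Definition in_span (k : nat) (q : nat -> {mpoly F[d]}) (p : {mpoly F[d]}) :=
  exists a : 'I_k -> F, p = \sum_(m < k) a m *: q m.

Definition linpart (p : {mpoly F[d]}) : 'rV[F]_d :=
  \row_(i < d) p@_(U_(i)%MM).

(* breadth of the subspace Q (given by its membership predicate) is r:
   the space { linpart p | p in Q, total degree p <= 1 } has dimension r,
   i.e. it is the row space of some r x d matrix with independent rows. *)
Definition breadth_is (Q : {mpoly F[d]} -> Prop) (r : nat) : Prop :=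
  exists B : 'M[F]_(r, d), row_free B /\
    forall u : 'rV[F]_d,
      (u <= B)%MS <-> exists p, Q p /\ (msize p <= 2)%N /\ linpart p = u.

End Defs.

From HB Require Import structures.
From mathcomp Require Import all_boot all_order all_algebra.
From mathcomp Require Import mpoly.
Set Implicit Arguments. Unset Strict Implicit. Unset Printing Implicit Defensive.
Import GRing.Theory.
Local Open Scope ring_scope.

(* Since every b_j >= 1, a term of q_{n,m} has degree |gamma| <= tau = m, so
   q_{n,m} has total degree at most m; and since b_j >= 2 for j >= 2, the
   monomial x_i^m arises in q_{n,m} only from gamma concentrated on the first
   coordinate of row i, with coefficient c_{i,1}^m / m!.  Choosing i with
   c_{i,1} != 0, a combination sum_m a_m q_{n,m} of degree at most one must
   have a_m = 0 for all m >= 2 (compare the coefficients of x_i^m from the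
   top down).  Its linear part is then a_1 (c_{1,1}, ..., c_{d,1}), and
   conversely every multiple of this vector is the linear part of a_1 q_{n,1}. *)

Section ExponentTables.
Variables (F : fieldType) (d n : nat) (b : nat -> nat) (c : 'I_d -> 'I_n -> F).

Local Notation table m := {ffun 'I_d -> {ffun 'I_n -> 'I_m.+1}}.

Definition table_tau m (g : table m) : nat := tau b (fun i j => nat_of_ord (g i j)).

Definition table_mnm m (g : table m) : 'X_{1..d} :=
  [multinom (\sum_(j < n) (g i j : nat))%N | i < d].

Definition table_coef m (g : table m) : F :=
  \prod_(i < d) \prod_(j < n) (c i j ^+ g i j / ((g i j)`!)%:R).

Lemma mcoeff_qnm m mm : (qnm b c m)@_mm =
  \sum_(g : table m | table_tau g == m) table_coef g * (table_mnm g == mm)%:R.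
Proof.
rewrite /qnm raddf_sum; apply: eq_bigr => g _.
rewrite /= mcoeffZ -mcoeffX mpolyXE_id; congr (_ * mcoeff _ _).
by apply: eq_bigr => i _; rewrite mnmE.
Qed.

Lemma mdeg_table_mnm m (g : table m) :
  mdeg (table_mnm g) = (\sum_(j < n) \sum_(i < d) (g i j : nat))%N.
Proof.
by rewrite mdegE exchange_big; apply: eq_bigr => i _; rewrite mnmE.
Qed.

Section PositiveWeights.
Hypothesis b_gt0 : forall j, (j < n)%N -> (0 < b j)%N.

Lemma mdeg_table_mnm_le m (g : table m) : (mdeg (table_mnm g) <= table_tau g)%N.
Proof.
rewrite mdeg_table_mnm /table_tau /tau; apply: leq_sum => j _.
by rewrite leq_pmull ?b_gt0.
Qed.

Lemma mcoeff_qnm_eq0 m mm : (m < mdeg mm)%N -> (qnm b c m)@_mm = 0.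
Proof.
move=> lt_m_mm; rewrite mcoeff_qnm big1 // => g /eqP tau_g.
case: eqP => [mnm_g|]; last by rewrite mulr0.
by have := mdeg_table_mnm_le g; rewrite mnm_g tau_g leqNgt lt_m_mm.
Qed.

Lemma msize_qnm m : (msize (qnm b c m) <= m.+1)%N.
Proof.
rewrite msizeE; apply/bigmax_leqP_seq => mm mm_supp _.
rewrite ltnS leqNgt; apply: contraL mm_supp => lt_m_mm.
by rewrite -mcoeff_eq0 mcoeff_qnm_eq0.
Qed.

End PositiveWeights.

Section UnitFirstWeight.
Hypotheses (b0 : b 0%N = 1%N) (b_gt1 : forall j, (0 < j < n)%N -> (1 < b j)%N).
Variable h0 : (0 < n)%N.
Local Notation j0 := (Ordinal h0).

Let b_gt0 j : (j < n)%N -> (0 < b j)%N.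
Proof. by case: j => [|j] lt_j; rewrite ?b0 // ltnW // b_gt1. Qed.

Lemma table_tau_ge m (g : table m) i j : j != j0 ->
  (mdeg (table_mnm g) + g i j <= table_tau g)%N.
Proof.
move=> ne_j; have j_gt0 : (0 < j)%N.
  by rewrite lt0n; apply: contra ne_j => /eqP j_eq0; apply/eqP/val_inj.
rewrite mdeg_table_mnm /table_tau /tau.
have le_gs : (g i j <= \sum_(i < d) g i j)%N by rewrite (bigD1 i) //= leq_addr.
rewrite [X in (X + _ <= _)%N](bigD1 j) //= [X in (_ <= X)%N](bigD1 j) //= addnAC.
apply: leq_add; last by apply: leq_sum => k _; rewrite leq_pmull ?b_gt0.
apply: leq_trans (leq_add (leqnn _) le_gs) _.
by rewrite addnn -mul2n leq_mul2r b_gt1 ?orbT // j_gt0 ltn_ord.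
Qed.

Section PureTable.
Variable i0 : 'I_d.

Definition pure_table m : table m :=
  [ffun i => [ffun j => if (i == i0) && (j == j0) then ord_max else ord0]].

Lemma pure_tableE m i j :
  (pure_table m i j : nat) = if (i == i0) && (j == j0) then m else 0%N.
Proof. by rewrite !ffunE; case: ifP. Qed.

Lemma table_mnm_pure m : table_mnm (pure_table m) = (U_(i0) *+ m)%MM.
Proof.
apply/mnmP => i; rewrite !mnmE mulmnE mnm1E eq_sym.
rewrite (bigD1 j0) //= big1 => [|j ne_j]; last by rewrite pure_tableE (negbTE ne_j) andbF.
by rewrite pure_tableE eqxx andbT addn0; case: eqP; rewrite ?mul1n ?mul0n.
Qed.

Lemma table_tau_pure m : table_tau (pure_table m) = m.
Proof.
have col j : (\sum_(i < d) pure_table m i j)%N = if j == j0 then m else 0%N.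
  rewrite (bigD1 i0) //= big1 => [|i ne_i]; last by rewrite pure_tableE (negbTE ne_i).
  by rewrite pure_tableE eqxx addn0.
rewrite /table_tau /tau (bigD1 j0) //= col eqxx b0 mul1n big1 ?addn0 // => j ne_j.
by rewrite col (negbTE ne_j) muln0.
Qed.

Lemma table_coef_pure m : table_coef (pure_table m) = c i0 j0 ^+ m / (m`!)%:R.
Proof.
have trivial_factor i j : (i != i0) || (j != j0) ->
    c i j ^+ pure_table m i j / ((pure_table m i j)`!)%:R = 1.
  by case/orP => ne; rewrite pure_tableE (negbTE ne) ?andbF expr0 divr1.
rewrite /table_coef (bigD1 i0) //= (bigD1 j0) //= pure_tableE !eqxx.
rewrite big1 => [|j ne_j]; last by rewrite trivial_factor ?ne_j ?orbT.
rewrite big1 => [|i ne_i]; last by rewrite big1 // => j _; rewrite trivial_factor ?ne_i.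
by rewrite !mulr1.
Qed.

Lemma pure_table_uniq m (g : table m) :
  table_tau g = m -> table_mnm g = (U_(i0) *+ m)%MM -> g = pure_table m.
Proof.
move=> tau_g mnm_g.
have mdeg_g : mdeg (table_mnm g) = m by rewrite mnm_g mdegMn mdeg1 mul1n.
have off_j0 i j : j != j0 -> g i j = 0 :> nat.
  move=> ne_j; apply/eqP; have := table_tau_ge g i ne_j.
  by rewrite mdeg_g tau_g -leq_subRL // subnn leqn0.
apply/ffunP => i; apply/ffunP => j; apply: val_inj; rewrite /= pure_tableE.
have [->|ne_j] := eqVneq j j0; last by rewrite andbF off_j0.
have /mnmP/(_ i) := mnm_g; rewrite !mnmE mulmnE mnm1E eq_sym (bigD1 j0) //=.
rewrite big1 => [|k ne_k]; last exact: off_j0.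
by rewrite addn0 andbT => ->; case: eqP; rewrite ?mul1n ?mul0n.
Qed.

Lemma mcoeff_qnm_pure m : (qnm b c m)@_(U_(i0) *+ m) = c i0 j0 ^+ m / (m`!)%:R.
Proof.
rewrite mcoeff_qnm (bigD1 (pure_table m)) /= ?table_tau_pure ?eqxx //.
rewrite table_mnm_pure table_coef_pure eqxx mulr1 big1 ?addr0 // => g /andP[/eqP tau_g ne_g].
by case: eqP => [/(pure_table_uniq tau_g) eq_g|]; [rewrite eq_g eqxx in ne_g | rewrite mulr0].
Qed.

End PureTable.

Lemma linpart_qnm1 : linpart (qnm b c 1) = \row_i c i j0.
Proof.
by apply/rowP => i; rewrite !mxE -[U_(i)%MM]mulm1n mcoeff_qnm_pure expr1 divr1.
Qed.

Lemma span_qnm_linpart k u : (1 < k)%N -> (u <= \row_i c i j0)%MS ->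
  exists p, in_span k (qnm b c) p /\ (msize p <= 2)%N /\ linpart p = u.
Proof.
move=> lt1k /sub_rVP[a ->]; exists (a *: qnm b c 1); split; last split.
- exists (fun m : 'I_k => if m == Ordinal lt1k then a else 0).
  rewrite (bigD1 (Ordinal lt1k)) //= big1 ?addr0 // => m /negbTE->.
  by rewrite scale0r.
- exact: leq_trans (msizeZ_le _ _) (msize_qnm b_gt0 1).
- by apply/rowP => i; rewrite -linpart_qnm1 !mxE mcoeffZ.
Qed.

Hypothesis char_F : [pchar F] =i pred0.
Variable i0 : 'I_d.
Hypothesis c_neq0 : c i0 j0 != 0.

(* Induction on t runs m downward from k - 1: the coefficient of x_{i0}^m in
   the combination involves only a_m and the already vanishing a_m', m' > m. *)
Lemma span_qnm_coef_eq0 k (a : 'I_k -> F) s :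
  (msize (\sum_(m < k) a m *: qnm b c m) <= s.+1)%N ->
  forall m : 'I_k, (s < m)%N -> a m = 0.
Proof.
move=> size_p; suff vanish t (m : 'I_k) : (k <= m + t)%N -> (s < m)%N -> a m = 0.
  by move=> m; apply: (vanish k); rewrite leq_addl.
elim: t m => [|t IHt] m le_k_mt lt_sm; first by rewrite addn0 leqNgt ltn_ord in le_k_mt.
have : (\sum_(m < k) a m *: qnm b c m)@_(U_(i0) *+ m) = 0.
  apply/eqP; rewrite mcoeff_eq0; apply: msize_mdeg_ge.
  by rewrite mdegMn mdeg1 mul1n (leq_trans size_p).
rewrite raddf_sum (bigD1 m) //= big1 ?addr0 => [|m' ne_m'].
  rewrite mcoeffZ mcoeff_qnm_pure => /eqP; rewrite !mulf_eq0 invr_eq0 expf_eq0.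
  rewrite (negbTE c_neq0) andbF ((pcharf0P _).1 char_F) gtn_eqF ?fact_gt0 // !orbF.
  by move/eqP.
rewrite mcoeffZ; have [lt_m'm|lt_mm'|/val_inj eq_m'] := ltngtP m' m.
- by rewrite mcoeff_qnm_eq0 ?mulr0 // mdegMn mdeg1 mul1n.
- rewrite IHt ?mul0r ?(ltn_trans lt_sm lt_mm') //.
  by apply: leq_trans le_k_mt _; rewrite addnS -addSn leq_add2r.
- by rewrite eq_m' eqxx in ne_m'.
Qed.

Lemma linpart_span_qnm k p : (1 < k)%N -> in_span k (qnm b c) p ->
  (msize p <= 2)%N -> (linpart p <= \row_i c i j0)%MS.
Proof.
move=> lt1k [a ->] size_p; apply/sub_rVP; exists (a (Ordinal lt1k)).
rewrite -linpart_qnm1; apply/rowP => i; rewrite !mxE raddf_sum (bigD1 (Ordinal lt1k)) //=.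
rewrite mcoeffZ big1 ?addr0 // => m ne_m; rewrite mcoeffZ.
have [m_eq0|m_gt0] := posnP m.
  by rewrite mcoeff_qnm_eq0 ?mulr0 // m_eq0 mdeg1.
rewrite (span_qnm_coef_eq0 size_p) ?mul0r // ltn_neqAle m_gt0 andbT.
by apply: contra ne_m => /eqP m_eq1; apply/eqP/val_inj.
Qed.

End UnitFirstWeight.
End ExponentTables.

Theorem lemma3 (F : fieldType) (d n : nat) (b : nat -> nat)
    (c : 'I_d -> 'I_n -> F) :
  [pchar F] =i pred0 ->
  (1 <= d)%N -> (2 <= n)%N ->
  b 0%N = 1%N -> (2 <= b 1%N)%N ->
  (forall j : nat, (1 <= j)%N -> (j.+1 < n)%N -> (b j < b j.+1)%N) ->
  (exists i : 'I_d, exists h : (0 < n)%N, c i (Ordinal h) != 0) ->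
  breadth_is (in_span (b n.-1).+1 (qnm b c)) 1.
Proof.
move=> char_F _ n_gt1 b0 b1_gt1 b_incr [i0 [h0 c_neq0]].
have b_gt1 j : (0 < j < n)%N -> (1 < b j)%N.
  elim: j => [//|[_|j IHj] /andP[_ lt_jn]] //.
  by rewrite (ltn_trans (IHj (ltnW lt_jn))) ?b_incr.
have lt1k : (1 < (b n.-1).+1)%N.
  by rewrite ltnS ltnW // b_gt1 // -subn1 subn_gt0 n_gt1 subn1 ltn_predL ltnW.
exists (\row_i c i (Ordinal h0)); split.
  rewrite /row_free rank_rV; suff -> : \row_i c i (Ordinal h0) != 0 by [].
  by apply: contraNneq c_neq0 => /rowP/(_ i0)/eqP; rewrite !mxE.
move=> u; split; first exact: (span_qnm_linpart b0 b_gt1 lt1k).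
by case=> p [p_span [size_p <-]]; exact: (linpart_span_qnm b0 b_gt1 char_F c_neq0 lt1k p_span).
Qed.
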